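(* Let $m\in\{1,2\}$ and $\gamma\in[2,3]$. Then for every $z\in[z_m,z_M)$, $C(V_1;\gamma,z,P_6)\ne C_1$; that is, the analytic connection from $P_1$ guaranteed by the existence of $z_{std}$ can only pass through $P_8$ (at $z=z_M$ the points $P_6$ and $P_8$ coincide).
   Context: Fix $m\in\{1,2\}$. For $z>0$ put $\lambda=1+m\gamma z$, $a_1=1+\frac{m(\gamma-1)}{2}$, $a_2=\frac{m(\gamma-1)+mz\gamma(\gamma-3)}{2}$, $a_3=\frac{mz\gamma(\gamma-1)}{2}$, $G(V,C;\gamma,z)=C^2[(m+1)V+2mz]-V(1+V)(\lambda+V)$, $F(V,C;\gamma,z)=C\{C^2[1+\frac{mz}{1+V}]-a_1(1+V)^2+a_2(1+V)-a_3\}$; ODE $\frac{dC}{dV}=\frac FG$. $V_1=-\frac2{\gamma+1}$, $C_1=\frac{\sqrt{2\gamma(\gamma-1)}}{\gamma+1}$. $z_M=(\sqrt\gamma+\sqrt2)^{-2}$, $z_m=\frac{\gamma-1}{(2\gamma-1)(\gamma+1)}$; $w(z)=\sqrt{1-2(\gamma+2)z+(\gamma-2)^2z^2}$, $V_6=\frac{-1+(\gamma-2)z-w}{2}$, $C_6=1+V_6$, $V_8=\frac{-1+(\gamma-2)z+w}{2}$, $C_8=1+V_8$, $P_6=(V_6,C_6)$, $P_8=(V_8,C_8)$. For $z\in[z_m,z_M]$, $C(\cdot;\gamma,z,P_6):[V_1,V_6]\to(0,\infty)$ is the real-analytic solution of the ODE near $V_6$ with $C(V_6)=C_6$ and $C'(V_6)$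 equal to the unique negative root of $-G_Cc^2+(F_C-G_V)c+F_V=0$ (partials at $P_6$), continued to $[V_1,V_6]$. *)

From Stdlib Require Import Reals Lra.
From Coquelicot Require Import Coquelicot.
Open Scope R_scope.

Section Defs.
Variables (m gamma z : R).

Definition lam : R := 1 + m * gamma * z.
Definition a1 : R := 1 + m * (gamma - 1) / 2.
Definition a2 : R := (m * (gamma - 1) + m * z * gamma * (gamma - 3)) / 2.
Definition a3 : R := m * z * gamma * (gamma - 1) / 2.

Definition Gf (V C : R) : R :=
  C ^ 2 * ((m + 1) * V + 2 * m * z) - V * (1 + V) * (lam + V).

Definition Ff (V C : R) : R :=
  C * (C ^ 2 * (1 + m * z / (1 + V)) - a1 * (1 + V) ^ 2 + a2 * (1 + V) - a3).

Definition V1pt : R := - 2 / (gamma + 1).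
Definition C1pt : R := sqrt (2 * gamma * (gamma - 1)) / (gamma + 1).

Definition zM : R := / (sqrt gamma + sqrt 2) ^ 2.
Definition zm : R := (gamma - 1) / ((2 * gamma - 1) * (gamma + 1)).

Definition wz : R := sqrt (1 - 2 * (gamma + 2) * z + (gamma - 2) ^ 2 * z ^ 2).
Definition V6pt : R := (-1 + (gamma - 2) * z - wz) / 2.
Definition C6pt : R := 1 + V6pt.
Definition V8pt : R := (-1 + (gamma - 2) * z + wz) / 2.
Definition C8pt : R := 1 + V8pt.

Definition G_V6 : R := Derive (fun V => Gf V C6pt) V6pt.
Definition G_C6 : R := Derive (fun C => Gf V6pt C) C6pt.
Definition F_V6 : R := Derive (fun V => Ff V C6pt) V6pt.
Definition F_C6 : R := Derive (fun C => Ff V6pt C) C6pt.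

(* c is the slope at P6 of the solution: negative root of the quadratic *)
Definition slope6 (c : R) : Prop :=
  c < 0 /\ - G_C6 * c ^ 2 + (F_C6 - G_V6) * c + F_V6 = 0.

Definition sol_P6 (C : R -> R) : Prop :=
  (exists r : R, 0 < r /\ exists a : nat -> R,
     forall V, Rabs (V - V6pt) < r -> is_pseries a (V - V6pt) (C V)) /\
  C V6pt = C6pt /\
  (exists c, slope6 c /\ is_derive C V6pt c) /\
  (forall V, V1pt < V < V6pt ->
     Gf V (C V) <> 0 /\ is_derive C V (Ff V (C V) / Gf V (C V))) /\
  filterlim C (at_right V1pt) (locally (C V1pt)) /\
  (forall V, V1pt <= V <= V6pt -> 0 < C V).

End Defs.

From Coquelicot Require Import Coquelicot.
From Stdlib Require Import Reals Lra Lia ZArith List.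
Import ListNotations.
Open Scope R_scope.

(* Put gamma = k^2/(k^2-2) with k in [sqrt 3, 2], so that C1 = k/(k^2-1) and
   V1 = -(k^2-2)/(k^2-1).  The line L through (V1, C1 - 1/1000) with slope
   (32k-79)/16 passes above P6, because z < zM forces V6 below an explicit
   bound V6_bound k.  Along L, for V1 <= V <= V6_bound k, the field satisfies
   G < 0 and F/G > slope of L, so the solution cannot touch L from below while
   being continued leftwards from V6.  Hence C(V1) <= C1 - 1/1000.  Both F and
   G are affine in z, so it suffices to check the two ends zm and an upper
   bound of zM; the resulting polynomial inequalities in (k,V) are certified
   by exact integer bisection. *)

Notation zpoly := (list Z).
Notation zpoly2 := (list (list Z)).

Definition zpeval (p : zpoly) (x : R) : R := fold_right (fun a r => IZR a + x * r) 0 p.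

(* [M] lists the coefficients of [1, k, k^2, ...], each a polynomial in [t]. *)
Definition zpeval2 (M : zpoly2) (k t : R) : R :=
  fold_right (fun p r => zpeval p t + k * r) 0 M.

Lemma zpeval_cons a p x : zpeval (a :: p) x = IZR a + x * zpeval p x.
Proof. reflexivity. Qed.

Lemma zpeval2_cons p M k t : zpeval2 (p :: M) k t = zpeval p t + k * zpeval2 M k t.
Proof. reflexivity. Qed.

Fixpoint zpadd (p q : zpoly) : zpoly :=
  match p, q with
  | [], _ => q
  | _, [] => p
  | a :: p', b :: q' => (a + b)%Z :: zpadd p' q'
  end.

Fixpoint zpadd2 (M N : zpoly2) : zpoly2 :=
  match M, N with
  | [], _ => N
  | _, [] => M
  | p :: M', q :: N' => zpadd p q :: zpadd2 M' N'
  end.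

Lemma zpeval_add p q x : zpeval (zpadd p q) x = zpeval p x + zpeval q x.
Proof.
  revert q; induction p as [|a p IH]; intros [|b q]; cbn [zpadd]; try (simpl; ring).
  rewrite !zpeval_cons, IH, plus_IZR. ring.
Qed.

Lemma zpeval2_add M N k t : zpeval2 (zpadd2 M N) k t = zpeval2 M k t + zpeval2 N k t.
Proof.
  revert N; induction M as [|p M IH]; intros [|q N]; cbn [zpadd2]; try (simpl; ring).
  rewrite !zpeval2_cons, IH, zpeval_add. ring.
Qed.

Lemma zpeval_scale (c : Z) p x : zpeval (map (Z.mul c) p) x = IZR c * zpeval p x.
Proof.
  induction p as [|a p IH]; [simpl; ring|].
  cbn [map]. rewrite !zpeval_cons, IH, mult_IZR. ring.
Qed.

Lemma IZR_pow2 n : IZR (2 ^ Z.of_nat n) = 2 ^ n.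
Proof. rewrite <- pow_IZR. reflexivity. Qed.

Fixpoint zphalve (n : nat) (p : zpoly) : zpoly :=
  match p with
  | [] => []
  | a :: p' => (2 ^ Z.of_nat n * a)%Z :: zphalve (pred n) p'
  end.

Fixpoint zphalve_k (n : nat) (M : zpoly2) : zpoly2 :=
  match M with
  | [] => []
  | p :: M' => map (Z.mul (2 ^ Z.of_nat n)) p :: zphalve_k (pred n) M'
  end.

Definition zphalve_t (n : nat) (M : zpoly2) : zpoly2 := map (zphalve n) M.

Lemma zpeval_halve n p x :
  (length p <= S n)%nat -> zpeval (zphalve n p) x = 2 ^ n * zpeval p (x / 2).
Proof.
  revert n; induction p as [|a p IH]; intros n Hn; [simpl; ring|].
  cbn [zphalve]. rewrite !zpeval_cons, mult_IZR, IZR_pow2.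
  destruct p as [|b p]; [simpl; ring|].
  destruct n as [|n]; [simpl in Hn; lia|].
  rewrite IH by (simpl in *; lia). simpl pow. field.
Qed.

Lemma zpeval2_halve_k n M k t :
  (length M <= S n)%nat -> zpeval2 (zphalve_k n M) k t = 2 ^ n * zpeval2 M (k / 2) t.
Proof.
  revert n; induction M as [|p M IH]; intros n Hn; [simpl; ring|].
  cbn [zphalve_k]. rewrite !zpeval2_cons, zpeval_scale, IZR_pow2.
  destruct M as [|q M]; [simpl; ring|].
  destruct n as [|n]; [simpl in Hn; lia|].
  rewrite IH by (simpl in *; lia). simpl pow. field.
Qed.

Lemma zpeval2_halve_t n M k t :
  Forall (fun p => (length p <= S n)%nat) M ->
  zpeval2 (zphalve_t n M) k t = 2 ^ n * zpeval2 M k (t / 2).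
Proof.
  induction 1 as [|p M Hp _ IH]; [simpl; ring|].
  change (zphalve_t n (p :: M)) with (zphalve n p :: zphalve_t n M).
  rewrite !zpeval2_cons, IH, zpeval_halve by exact Hp. ring.
Qed.

Definition zpshift (p : zpoly) : zpoly :=
  fold_right (fun a r => zpadd [a] (zpadd r (0%Z :: r))) [] p.

Definition zpshift_k (M : zpoly2) : zpoly2 :=
  fold_right (fun p S => zpadd2 [p] (zpadd2 S ([] :: S))) [] M.

Definition zpshift_t (M : zpoly2) : zpoly2 := map zpshift M.

Lemma zpeval_shift p x : zpeval (zpshift p) x = zpeval p (1 + x).
Proof.
  induction p as [|a p IH]; [reflexivity|].
  change (zpshift (a :: p)) with (zpadd [a] (zpadd (zpshift p) (0%Z :: zpshift p))).
  rewrite !zpeval_add, !zpeval_cons, IH. simpl. ring.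
Qed.

Lemma zpeval2_shift_k M k t : zpeval2 (zpshift_k M) k t = zpeval2 M (1 + k) t.
Proof.
  induction M as [|p M IH]; [reflexivity|].
  change (zpshift_k (p :: M)) with (zpadd2 [p] (zpadd2 (zpshift_k M) ([] :: zpshift_k M))).
  rewrite !zpeval2_add, !zpeval2_cons, IH. simpl. ring.
Qed.

Lemma zpeval2_shift_t M k t : zpeval2 (zpshift_t M) k t = zpeval2 M k (1 + t).
Proof.
  induction M as [|p M IH]; [reflexivity|].
  change (zpshift_t (p :: M)) with (zpshift p :: zpshift_t M).
  rewrite !zpeval2_cons, IH, zpeval_shift. reflexivity.
Qed.

(* [c / 2^r] rounded up: on the positive quadrant, rounding all coefficients
   up can only increase the polynomial, so negativity survives it. *)
Definition zceil_shiftr (r c : Z) : Z := (- Z.shiftr (- c) r)%Z.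

Lemma zceil_shiftr_ge r c : (0 <= r)%Z -> IZR c <= IZR (2 ^ r) * IZR (zceil_shiftr r c).
Proof.
  intros Hr. unfold zceil_shiftr. rewrite Z.shiftr_div_pow2, <- mult_IZR by exact Hr.
  apply IZR_le.
  assert (Hp : (0 < 2 ^ r)%Z) by (apply Z.pow_pos_nonneg; lia).
  pose proof (Z.mul_div_le (- c) (2 ^ r) Hp). lia.
Qed.

Definition zpround2 (r : Z) (M : zpoly2) : zpoly2 := map (map (zceil_shiftr r)) M.

Lemma zpeval_round r p x :
  (0 <= r)%Z -> 0 <= x -> zpeval p x <= IZR (2 ^ r) * zpeval (map (zceil_shiftr r) p) x.
Proof.
  intros Hr Hx. induction p as [|a p IH]; [simpl; lra|].
  cbn [map]. rewrite !zpeval_cons.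
  pose proof (zceil_shiftr_ge r a Hr). pose proof (Rmult_le_compat_l x _ _ Hx IH). lra.
Qed.

Lemma zpeval2_round r M k t :
  (0 <= r)%Z -> 0 <= k -> 0 <= t -> zpeval2 M k t <= IZR (2 ^ r) * zpeval2 (zpround2 r M) k t.
Proof.
  intros Hr Hk Ht. induction M as [|p M IH]; [simpl; lra|].
  change (zpround2 r (p :: M)) with (map (zceil_shiftr r) p :: zpround2 r M).
  rewrite !zpeval2_cons.
  pose proof (zpeval_round r p t Hr Ht). pose proof (Rmult_le_compat_l k _ _ Hk IH). lra.
Qed.

Definition zpmaxabs (M : zpoly2) : Z :=
  fold_right (fun p m => fold_right (fun c m' => Z.max (Z.abs c) m') m p) 0%Z M.

(* Coefficients are cut back to about 63 bits after each subdivision step. *)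
Definition zptrim (M : zpoly2) : zpoly2 :=
  zpround2 (Z.max 0 (Z.log2 (zpmaxabs M) - 62)) M.

Lemma zpeval2_trim_neg M k t :
  0 <= k -> 0 <= t -> zpeval2 (zptrim M) k t < 0 -> zpeval2 M k t < 0.
Proof.
  intros Hk Ht H. set (r := Z.max 0 (Z.log2 (zpmaxabs M) - 62)).
  assert (Hr : (0 <= r)%Z) by lia.
  pose proof (zpeval2_round r M k t Hr Hk Ht).
  assert (0 < IZR (2 ^ r)) by (apply IZR_lt, Z.pow_pos_nonneg; lia).
  unfold zptrim in H. fold r in H. nra.
Qed.

Definition deg_k (M : zpoly2) : nat := pred (length M).

Definition deg_t (M : zpoly2) : nat :=
  pred (fold_right (fun p d => Nat.max (length p) d) 0%nat M).

Lemma length_le_deg_k M : (length M <= S (deg_k M))%nat.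
Proof. unfold deg_k. lia. Qed.

Lemma length_le_deg_t M : Forall (fun p => (length p <= S (deg_t M))%nat) M.
Proof.
  assert (Hmax : forall N : zpoly2,
    Forall (fun p => (length p <= fold_right (fun p d => Nat.max (length p) d) 0%nat N)%nat) N).
  { induction N as [|p N IH]; constructor; simpl; [lia|].
    eapply Forall_impl; [|exact IH]. simpl. lia. }
  eapply Forall_impl; [|apply Hmax]. unfold deg_t. simpl. lia.
Qed.

(* Up to a positive factor, [lower_k M] and [upper_k M] are [M] restricted to
   [k] in [0, 1/2] and [1/2, 1], rescaled to [k] in [0, 1]; likewise in [t]. *)
Definition lower_k (M : zpoly2) : zpoly2 := zptrim (zphalve_k (deg_k M) M).
Definition upper_k (M : zpoly2) : zpoly2 := zptrim (zpshift_k (zphalve_k (deg_k M) M)).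
Definition lower_t (M : zpoly2) : zpoly2 := zptrim (zphalve_t (deg_t M) M).
Definition upper_t (M : zpoly2) : zpoly2 := zptrim (zpshift_t (zphalve_t (deg_t M) M)).

Lemma lower_k_neg M k t :
  0 <= k <= 1/2 -> 0 <= t -> zpeval2 (lower_k M) (2 * k) t < 0 -> zpeval2 M k t < 0.
Proof.
  intros Hk Ht H. apply zpeval2_trim_neg in H; [|lra|lra].
  rewrite zpeval2_halve_k in H by apply length_le_deg_k.
  replace (2 * k / 2) with k in H by field.
  pose proof (pow_lt 2 (deg_k M) ltac:(lra)). nra.
Qed.

Lemma upper_k_neg M k t :
  1/2 <= k -> 0 <= t -> zpeval2 (upper_k M) (2 * k - 1) t < 0 -> zpeval2 M k t < 0.
Proof.
  intros Hk Ht H. apply zpeval2_trim_neg in H; [|lra|lra].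
  rewrite zpeval2_shift_k, zpeval2_halve_k in H by apply length_le_deg_k.
  replace ((1 + (2 * k - 1)) / 2) with k in H by field.
  pose proof (pow_lt 2 (deg_k M) ltac:(lra)). nra.
Qed.

Lemma lower_t_neg M k t :
  0 <= k -> 0 <= t <= 1/2 -> zpeval2 (lower_t M) k (2 * t) < 0 -> zpeval2 M k t < 0.
Proof.
  intros Hk Ht H. apply zpeval2_trim_neg in H; [|lra|lra].
  rewrite zpeval2_halve_t in H by apply length_le_deg_t.
  replace (2 * t / 2) with t in H by field.
  pose proof (pow_lt 2 (deg_t M) ltac:(lra)). nra.
Qed.

Lemma upper_t_neg M k t :
  0 <= k -> 1/2 <= t -> zpeval2 (upper_t M) k (2 * t - 1) < 0 -> zpeval2 M k t < 0.
Proof.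
  intros Hk Ht H. apply zpeval2_trim_neg in H; [|lra|lra].
  rewrite zpeval2_shift_t, zpeval2_halve_t in H by apply length_le_deg_t.
  replace ((1 + (2 * t - 1)) / 2) with t in H by field.
  pose proof (pow_lt 2 (deg_t M) ltac:(lra)). nra.
Qed.

Definition zpposmass (p : zpoly) : Z := fold_right (fun a s => (Z.max a 0 + s)%Z) 0%Z p.

Definition zpposmass2 (M : zpoly2) : Z := fold_right (fun p s => (zpposmass p + s)%Z) 0%Z M.

Definition unit_square_bound (M : zpoly2) : Z :=
  match M with
  | [] => 0
  | [] :: M' => zpposmass2 M'
  | (a :: p) :: M' => a + zpposmass p + zpposmass2 M'
  end.

Lemma zpposmass_nonneg p : (0 <= zpposmass p)%Z.
Proof. induction p as [|a p IH]; simpl; lia. Qed.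

Lemma zpposmass2_nonneg M : (0 <= zpposmass2 M)%Z.
Proof. induction M as [|p M IH]; simpl; [lia|]. pose proof (zpposmass_nonneg p). lia. Qed.

Lemma zpeval_le_posmass p x : 0 <= x <= 1 -> zpeval p x <= IZR (zpposmass p).
Proof.
  intros Hx. induction p as [|a p IH]; [simpl; lra|].
  rewrite zpeval_cons. cbn [zpposmass fold_right]. fold (zpposmass p).
  rewrite plus_IZR.
  assert (IZR a <= IZR (Z.max a 0)) by (apply IZR_le; lia).
  assert (0 <= IZR (zpposmass p)) by (apply IZR_le, zpposmass_nonneg).
  assert (x * zpeval p x <= IZR (zpposmass p)) by nra. lra.
Qed.

Lemma zpeval2_le_posmass2 M k t :
  0 <= k <= 1 -> 0 <= t <= 1 -> zpeval2 M k t <= IZR (zpposmass2 M).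
Proof.
  intros Hk Ht. induction M as [|p M IH]; [simpl; lra|].
  rewrite zpeval2_cons. cbn [zpposmass2 fold_right]. fold (zpposmass2 M).
  rewrite plus_IZR. pose proof (zpeval_le_posmass p t Ht).
  assert (0 <= IZR (zpposmass2 M)) by (apply IZR_le, zpposmass2_nonneg).
  assert (k * zpeval2 M k t <= IZR (zpposmass2 M)) by nra. lra.
Qed.

Lemma zpeval2_le_unit_square_bound M k t :
  0 <= k <= 1 -> 0 <= t <= 1 -> zpeval2 M k t <= IZR (unit_square_bound M).
Proof.
  intros Hk Ht. destruct M as [|p M]; [simpl; lra|].
  rewrite zpeval2_cons. pose proof (zpeval2_le_posmass2 M k t Hk Ht).
  assert (0 <= IZR (zpposmass2 M)) by (apply IZR_le, zpposmass2_nonneg).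
  assert (k * zpeval2 M k t <= IZR (zpposmass2 M)) by nra.
  destruct p as [|a p]; cbn [unit_square_bound]; [simpl; lra|].
  rewrite zpeval_cons, !plus_IZR. pose proof (zpeval_le_posmass p t Ht).
  assert (0 <= IZR (zpposmass p)) by (apply IZR_le, zpposmass_nonneg).
  assert (t * zpeval p t <= IZR (zpposmass p)) by nra. lra.
Qed.

Inductive bisection : Type :=
  | Stop (i : nat)
  | CutK (lo hi : bisection)
  | CutT (lo hi : bisection).

Fixpoint neg_cover (Ms : list zpoly2) (b : bisection) : bool :=
  match b with
  | Stop i => Z.ltb (unit_square_bound (nth i Ms [])) 0
  | CutK lo hi => neg_cover (map lower_k Ms) lo && neg_cover (map upper_k Ms) hi
  | CutT lo hi => neg_cover (map lower_t Ms) lo && neg_cover (map upper_t Ms) hi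
  end.

Lemma nth_map_fixed {A : Type} (f : A -> A) (l : list A) (d : A) i :
  f d = d -> nth i (map f l) d = f (nth i l d).
Proof. intros Hd. rewrite <- Hd at 1. apply map_nth. Qed.

Lemma neg_cover_sound b Ms : neg_cover Ms b = true ->
  forall k t, 0 <= k <= 1 -> 0 <= t <= 1 -> exists i, zpeval2 (nth i Ms []) k t < 0.
Proof.
  revert Ms; induction b as [i|lo IHlo hi IHhi|lo IHlo hi IHhi]; intros Ms Hc k t Hk Ht;
    simpl in Hc.
  - exists i. apply Z.ltb_lt, IZR_lt in Hc.
    pose proof (zpeval2_le_unit_square_bound (nth i Ms []) k t Hk Ht). lra.
  - apply andb_prop in Hc as [Hlo Hhi]. destruct (Rle_lt_dec k (1/2)).
    + destruct (IHlo _ Hlo (2 * k) t ltac:(lra) Ht) as [i Hi]. exists i.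
      rewrite nth_map_fixed in Hi by reflexivity. apply lower_k_neg in Hi; lra.
    + destruct (IHhi _ Hhi (2 * k - 1) t ltac:(lra) Ht) as [i Hi]. exists i.
      rewrite nth_map_fixed in Hi by reflexivity. apply upper_k_neg in Hi; lra.
  - apply andb_prop in Hc as [Hlo Hhi]. destruct (Rle_lt_dec t (1/2)).
    + destruct (IHlo _ Hlo k (2 * t) Hk ltac:(lra)) as [i Hi]. exists i.
      rewrite nth_map_fixed in Hi by reflexivity. apply lower_t_neg in Hi; lra.
    + destruct (IHhi _ Hhi k (2 * t - 1) Hk ltac:(lra)) as [i Hi]. exists i.
      rewrite nth_map_fixed in Hi by reflexivity. apply upper_t_neg in Hi; lra.
Qed.

Lemma neg_cover3_sound A B C b : neg_cover [A; B; C] b = true ->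
  forall k t, 0 <= k <= 1 -> 0 <= t <= 1 ->
  0 <= zpeval2 B k t -> 0 <= zpeval2 C k t -> zpeval2 A k t < 0.
Proof.
  intros Hc k t Hk Ht HB HC.
  destruct (neg_cover_sound b _ Hc k t Hk Ht) as [[|[|[|i]]] Hi]; simpl in Hi; try lra.
  destruct i; simpl in Hi; lra.
Qed.

Lemma locally_R (x : R) (P : R -> Prop) :
  locally x P -> exists eps : posreal, forall y, Rabs (y - x) < eps -> P y.
Proof. intros [eps Heps]. exists eps. intros y Hy. apply Heps. exact Hy. Qed.

Lemma continuous_locally_lt (f : R -> R) (x c : R) :
  continuous f x -> f x < c -> locally x (fun y => f y < c).
Proof. intros Hf Hx. exact (Hf _ (open_lt c (f x) Hx)). Qed.

Lemma continuous_locally_gt (f : R -> R) (x c : R) :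
  continuous f x -> c < f x -> locally x (fun y => c < f y).
Proof. intros Hf Hx. exact (Hf _ (open_gt c (f x) Hx)). Qed.

Lemma last_root (f : R -> R) (x b : R) :
  x <= b -> (forall y, x <= y <= b -> continuous f y) -> f x <= 0 -> 0 < f b ->
  exists c, x <= c < b /\ f c = 0 /\ (forall y, c < y <= b -> 0 < f y).
Proof.
  intros Hxb Hcont Hx Hb.
  set (E := fun y => x <= y <= b /\ f y <= 0).
  destruct (completeness E) as [c [Hub Hlub]].
  { exists b. intros y Ey. apply Ey. }
  { exists x. split; [lra | exact Hx]. }
  assert (Hxc : x <= c) by (apply Hub; split; [lra | exact Hx]).
  assert (Hcb : c <= b) by (apply Hlub; intros y Ey; apply Ey).
  assert (Hright : forall y, c < y <= b -> 0 < f y).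
  { intros y Hy. apply Rnot_le_lt. intros Hfy.
    assert (y <= c) by (apply Hub; split; [lra | exact Hfy]). lra. }
  assert (Hfc : f c <= 0).
  { apply Rnot_lt_le. intros Hfc.
    destruct (locally_R _ _ (continuous_locally_gt f c 0 (Hcont c ltac:(lra)) Hfc))
      as [eps Heps].
    pose proof (cond_pos eps).
    assert (Hc : c <= c - eps); [| lra].
    apply Hlub. intros y [Hy Hfy]. apply Rnot_lt_le. intros Hlt.
    assert (y <= c) by (apply Hub; split; assumption).
    assert (0 < f y) by (apply Heps, Rabs_def1; lra). lra. }
  assert (Hcb' : c < b) by (destruct (Req_dec c b) as [->|]; lra).
  exists c. split; [lra | split; [| exact Hright]].
  apply Rle_antisym; [exact Hfc |]. apply Rnot_lt_le. intros Hneg.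
  destruct (locally_R _ _ (continuous_locally_lt f c 0 (Hcont c ltac:(lra)) Hneg))
    as [eps Heps].
  pose proof (cond_pos eps).
  pose proof (Rmin_l (eps / 2) (b - c)). pose proof (Rmin_r (eps / 2) (b - c)).
  assert (Hd : 0 < Rmin (eps / 2) (b - c)) by (apply Rmin_glb_lt; lra).
  set (d := Rmin (eps / 2) (b - c)) in *.
  assert (f (c + d) < 0) by (apply Heps, Rabs_def1; lra).
  assert (0 < f (c + d)) by (apply Hright; lra). lra.
Qed.

Lemma is_derive_root_neg_right (f : R -> R) (c l eps : R) :
  is_derive f c l -> l < 0 -> f c = 0 -> 0 < eps ->
  exists y, c < y <= c + eps /\ f y < 0.
Proof.
  intros Hd Hl Hc Heps. apply is_derive_Reals in Hd.
  destruct (Hd (- l / 2) ltac:(lra)) as [del Hdel].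
  pose proof (cond_pos del). pose proof (Rmin_l (del / 2) eps). pose proof (Rmin_r (del / 2) eps).
  assert (Hh : 0 < Rmin (del / 2) eps) by (apply Rmin_glb_lt; lra).
  set (h := Rmin (del / 2) eps) in *.
  assert (Hhd : Rabs h < del) by (rewrite Rabs_pos_eq; lra).
  specialize (Hdel h ltac:(lra) Hhd). rewrite Hc, Rminus_0_r in Hdel.
  apply Rabs_def2 in Hdel.
  assert (Hinv : 0 < / h) by (apply Rinv_0_lt_compat; exact Hh).
  exists (c + h). split; [lra |]. unfold Rdiv in Hdel. nra.
Qed.

Lemma below_line_of_crossing_slopes (C D : R -> R) (a b c0 s : R) :
  a < b ->
  (forall x, a < x < b -> is_derive C x (D x)) -> ex_derive C b ->
  (forall x, a < x < b -> C x = c0 + s * (x - a) -> s < D x) ->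
  C b < c0 + s * (b - a) ->
  forall x, a < x <= b -> C x < c0 + s * (x - a).
Proof.
  intros Hab HC Hb Hcross Hend x Hx. apply Rnot_le_lt. intros Habove.
  set (h := fun y => c0 + s * (y - a) - C y).
  assert (Hh : forall y, a < y < b -> is_derive h y (s - D y)).
  { intros y Hy. apply (is_derive_minus (fun y => c0 + s * (y - a)) C); [| now apply HC].
    auto_derive; [trivial | ring]. }
  assert (Hcont : forall y, x <= y <= b -> continuous h y).
  { intros y Hy. apply (ex_derive_continuous h).
    destruct (Req_dec y b) as [->|]; [| eexists; apply Hh; lra].
    apply (ex_derive_minus (fun y => c0 + s * (y - a)) C); [auto_derive | exact Hb]; trivial. }
  destruct (last_root h x b) as [c [Hc [Hhc Hpos]]]; unfold h in *; try lra; [exact Hcont |].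
  assert (Hslope : s - D c < 0) by (apply Rlt_minus, Hcross; lra).
  destruct (is_derive_root_neg_right h c _ (b - c) (Hh c ltac:(lra)) Hslope Hhc ltac:(lra))
    as [y [Hy Hhy]].
  specialize (Hpos y ltac:(lra)). unfold h in Hhy. lra.
Qed.

Lemma right_limit_le_of_below_line (C : R -> R) (a b c0 s : R) :
  a < b -> (forall x, a < x <= b -> C x < c0 + s * (x - a)) ->
  filterlim C (at_right a) (locally (C a)) -> C a <= c0.
Proof.
  intros Hab Hbelow Hlim.
  assert (Hline : filterlim (fun x => c0 + s * (x - a)) (at_right a) (locally c0)).
  { apply (filterlim_filter_le_1 _ (filter_le_within _)).
    pose proof (ex_derive_continuous (fun x => c0 + s * (x - a)) a) as Hc.
    unfold continuous in Hc. rewrite Rminus_diag, Rmult_0_r, Rplus_0_r in Hc.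
    apply Hc. auto_derive. trivial. }
  refine (filterlim_le (F := at_right a) C _ (C a) c0 _ Hlim Hline).
  exists (mkposreal (b - a) ltac:(lra)). intros y Hy Hay. left. apply Hbelow.
  change (Rabs (y - a) < b - a) in Hy. apply Rabs_def2 in Hy. lra.
Qed.

Lemma affine_neg_between (f : R -> R) (z1 z2 z : R) :
  (forall z, f z = f 0 + z * (f 1 - f 0)) ->
  f z1 < 0 -> f z2 < 0 -> z1 <= z <= z2 -> f z < 0.
Proof.
  intros Hf H1 H2 Hz. rewrite Hf in H1, H2 |- *.
  destruct (Rle_lt_dec 0 (f 1 - f 0)).
  - assert (z * (f 1 - f 0) <= z2 * (f 1 - f 0)) by (apply Rmult_le_compat_r; lra). lra.
  - assert (z * (f 1 - f 0) <= z1 * (f 1 - f 0)) by nra. lra.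
Qed.

Definition gamma_of (k : R) : R := k^2 / (k^2 - 2).
Definition V1_of (k : R) : R := - (k^2 - 2) / (k^2 - 1).
Definition zm_of (k : R) : R := (k^2 - 2) / ((k^2 + 2) * (k^2 - 1)).

(* zM <= (g+2)/((g+2)^2 + 8g) at g = gamma_of k, since
   (sqrt g + sqrt 2)^2 (g+2) >= (g+2)^2 + 8g. *)
Definition zM_bound (k : R) : R := (3*k^2 - 4) * (k^2 - 2) / (17*k^4 - 40*k^2 + 16).

(* (-1 + (g-2) zM_bound)/2 at g = gamma_of k, which dominates V6. *)
Definition V6_bound (k : R) : R := -2 * (5*k^4 - 14*k^2 + 8) / (17*k^4 - 40*k^2 + 16).

Definition barrier_slope (k : R) : R := (32*k - 79) / 16.

Definition barrier_line (k V : R) : R :=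
  k / (k^2 - 1) - 1/1000 + barrier_slope k * (V - V1_of k).

Definition k_range (k : R) : Prop := 0 < k /\ 3 <= k^2 <= 4.

Lemma k_range_bounds k : k_range k -> 173/100 <= k <= 2.
Proof. intros [H0 [H3 H4]]. split; nra. Qed.

Lemma gamma_of_range k : k_range k -> 2 <= gamma_of k <= 3.
Proof.
  intros [_ [H3 H4]]. unfold gamma_of.
  split; apply (Rmult_le_reg_r (k^2 - 2)); try lra;
    unfold Rdiv; rewrite Rmult_assoc, Rinv_l; lra.
Qed.

Lemma gamma_param g : 2 <= g <= 3 -> exists k, k_range k /\ g = gamma_of k.
Proof.
  intros Hg. set (u := 2 * g / (g - 1)).
  assert (Hu : 3 <= u <= 4).
  { unfold u. split; apply (Rmult_le_reg_r (g - 1)); try lra;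
      replace (2 * g / (g - 1) * (g - 1)) with (2 * g) by (field; lra); lra. }
  exists (sqrt u). unfold k_range, gamma_of. rewrite pow2_sqrt by lra.
  split; [split; [apply sqrt_lt_R0; lra | exact Hu]|].
  unfold u. field. lra.
Qed.

Lemma C1pt_gamma_of k : k_range k -> C1pt (gamma_of k) = k / (k^2 - 1).
Proof.
  intros [H0 [H3 _]]. unfold C1pt, gamma_of.
  replace (2 * (k^2 / (k^2 - 2)) * (k^2 / (k^2 - 2) - 1))
    with ((2 * k / (k^2 - 2)) * (2 * k / (k^2 - 2))) by (field; lra).
  rewrite sqrt_square by (apply Rdiv_le_0_compat; lra).
  field. split; lra.
Qed.

Lemma V1pt_gamma_of k : k_range k -> V1pt (gamma_of k) = V1_of k.
Proof. intros [_ [H3 _]]. unfold V1pt, gamma_of, V1_of. field. split; lra. Qed.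

Lemma zm_gamma_of k : k_range k -> zm (gamma_of k) = zm_of k.
Proof. intros [_ [H3 _]]. unfold zm, gamma_of, zm_of. field. repeat split; nra. Qed.

Lemma zM_le g : 2 <= g -> zM g <= (g + 2) / ((g + 2)^2 + 8 * g).
Proof.
  intros Hg. unfold zM.
  pose proof (pow2_sqrt g ltac:(lra)) as Ha. pose proof (pow2_sqrt 2 ltac:(lra)) as Hb.
  pose proof (sqrt_pos g). pose proof (sqrt_pos 2).
  set (a := sqrt g) in *. set (b := sqrt 2) in *.
  assert (Hpos : 0 < ((g + 2)^2 + 8 * g) / (g + 2)) by (apply Rdiv_lt_0_compat; nra).
  assert (Hamgm : ((g + 2)^2 + 8 * g) / (g + 2) <= (a + b)^2).
  { apply (Rmult_le_reg_r (g + 2)); [lra|].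
    replace (((g + 2)^2 + 8 * g) / (g + 2) * (g + 2)) with ((g + 2)^2 + 8 * g) by (field; lra).
    rewrite <- Ha, <- Hb.
    assert (0 <= 2 * a * b * (a - b)^2) by (apply Rmult_le_pos; nra).
    nra. }
  apply Rinv_le_contravar in Hamgm; [|exact Hpos].
  replace (/ (((g + 2)^2 + 8 * g) / (g + 2))) with ((g + 2) / ((g + 2)^2 + 8 * g)) in Hamgm
    by (field; nra).
  exact Hamgm.
Qed.

Lemma zM_gamma_of_le k : k_range k -> zM (gamma_of k) <= zM_bound k.
Proof.
  intros Hk. pose proof (gamma_of_range k Hk). destruct Hk as [_ [H3 H4]].
  eapply Rle_trans; [apply zM_le; lra|].
  right. unfold gamma_of, zM_bound. field. repeat split; nra.
Qed.

Lemma V6pt_le g z zh : 2 <= g -> z <= zh -> V6pt g z <= (-1 + (g - 2) * zh) / 2.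
Proof.
  intros Hg Hz. unfold V6pt, wz.
  pose proof (sqrt_pos (1 - 2 * (g + 2) * z + (g - 2)^2 * z^2)).
  assert ((g - 2) * z <= (g - 2) * zh) by (apply Rmult_le_compat_l; lra). lra.
Qed.

Lemma V6pt_gamma_of_le k z : k_range k -> z <= zM_bound k -> V6pt (gamma_of k) z <= V6_bound k.
Proof.
  intros Hk Hz. pose proof (gamma_of_range k Hk). destruct Hk as [_ [H3 H4]].
  eapply Rle_trans; [apply (V6pt_le _ _ (zM_bound k)); lra|].
  right. unfold gamma_of, zM_bound, V6_bound. field. repeat split; nra.
Qed.

(* w^2 = r^2 - 8 (2g-1)/(g+1) (z - zm), where V6 - V1 = (r - w)/2. *)
Lemma V1pt_le_V6pt g z : 2 <= g <= 3 -> zm g <= z -> V1pt g <= V6pt g z.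
Proof.
  intros Hg Hz.
  assert (Hzm : 0 < zm g) by (unfold zm; apply Rdiv_lt_0_compat; nra).
  set (r := (g - 2) * z + (3 - g) / (g + 1)).
  assert (Hr : 0 <= r).
  { assert (0 <= (g - 2) * z) by nra.
    assert (0 <= (3 - g) / (g + 1)) by (apply Rdiv_le_0_compat; lra). unfold r; lra. }
  assert (Hd : 1 - 2 * (g + 2) * z + (g - 2)^2 * z^2 <= r^2).
  { assert (Hid : r^2 - (1 - 2 * (g + 2) * z + (g - 2)^2 * z^2)
                  = 8 * (2 * g - 1) / (g + 1) * (z - zm g))
      by (unfold r, zm; field; split; nra).
    assert (0 <= 8 * (2 * g - 1) / (g + 1) * (z - zm g))
      by (apply Rmult_le_pos; [apply Rdiv_le_0_compat|]; lra).
    lra. }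
  assert (Hw : wz g z <= r).
  { unfold wz. rewrite <- (sqrt_pow2 r Hr). apply sqrt_le_1_alt. exact Hd. }
  assert (Hid : V6pt g z - V1pt g = (r - wz g z) / 2)
    by (unfold V6pt, V1pt, r; field; lra).
  lra.
Qed.

Definition in_region (k V : R) : Prop := k_range k /\ V1_of k <= V <= V6_bound k.

Lemma in_region_box k V : in_region k V ->
  173/100 <= k <= 2 /\ -7/10 <= V <= -4/10 /\
  0 <= (k^2 - 2) + V * (k^2 - 1) /\
  0 <= -2 * (5*k^4 - 14*k^2 + 8) - V * (17*k^4 - 40*k^2 + 16).
Proof.
  intros [Hk [HV1 HV6]]. pose proof (k_range_bounds k Hk) as Hkb.
  destruct Hk as [H0 [H3 H4]].
  assert (HQ : 0 < 17*k^4 - 40*k^2 + 16) by nra.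
  assert (HA : V1_of k * (k^2 - 1) = - (k^2 - 2)) by (unfold V1_of; field; lra).
  assert (HB : V6_bound k * (17*k^4 - 40*k^2 + 16) = -2 * (5*k^4 - 14*k^2 + 8))
    by (unfold V6_bound; field; lra).
  assert (V1_of k * (k^2 - 1) <= V * (k^2 - 1)) by (apply Rmult_le_compat_r; lra).
  assert (V * (17*k^4 - 40*k^2 + 16) <= V6_bound k * (17*k^4 - 40*k^2 + 16))
    by (apply Rmult_le_compat_r; lra).
  repeat split; nra.
Qed.

Lemma in_region_factors k V : in_region k V ->
  0 < k^2 - 1 /\ 0 < k^2 - 2 /\ 0 < 17*k^4 - 40*k^2 + 16 /\ 0 < k^2 + 2 /\ 0 < 1 + V.
Proof.
  intros H. destruct (in_region_box k V H) as [_ [HV _]]. destruct H as [[_ [H3 H4]] _].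
  repeat split; nra.
Qed.

Lemma V1_of_le_V6_bound k : k_range k -> V1_of k <= V6_bound k.
Proof.
  intros [H0 [H3 H4]].
  assert (HQ : 0 < 17*k^4 - 40*k^2 + 16) by nra.
  assert (Hdiff : V6_bound k - V1_of k
                  = (7*k^6 - 36*k^4 + 52*k^2 - 16) / ((k^2 - 1) * (17*k^4 - 40*k^2 + 16)))
    by (unfold V6_bound, V1_of; field; lra).
  assert (0 <= (7*k^6 - 36*k^4 + 52*k^2 - 16) / ((k^2 - 1) * (17*k^4 - 40*k^2 + 16))); [|lra].
  apply Rdiv_le_0_compat; [|apply Rmult_lt_0_compat; lra].
  assert (0 <= (k^2 - 3) * (7*k^4 - 15*k^2 + 7)) by (apply Rmult_le_pos; nra).
  nra.
Qed.

Definition kscale (k : R) : R := (k - 173/100) * (100/27).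
Definition Vscale (V : R) : R := (V + 7/10) * (10/3).

Definition region_lo_poly : zpoly2 := ([[(-40213);(59787)];
 [(28026);(28026)];
 [(2187);(2187)]])%Z.

Definition region_hi_poly : zpoly2 := ([[(12219155779);(-14568197091)];
 [(10624675284);(-17308465236)];
 [(2487279474);(-5801581746)];
 [(258792084);(-694652436)];
 [(10097379);(-27103491)]])%Z.

Lemma region_lo_poly_eval k V :
  zpeval2 region_lo_poly (kscale k) (Vscale V) = 100000 * ((k^2 - 2) + V * (k^2 - 1)).
Proof. unfold kscale, Vscale, zpeval2, zpeval, region_lo_poly. cbn [fold_right]. field. Qed.

Lemma region_hi_poly_eval k V :
  zpeval2 region_hi_poly (kscale k) (Vscale V)
  = 1000000000 * (-2 * (5*k^4 - 14*k^2 + 8) - V * (17*k^4 - 40*k^2 + 16)).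
Proof. unfold kscale, Vscale, zpeval2, zpeval, region_hi_poly. cbn [fold_right]. field. Qed.

Lemma neg_of_certificate (A : zpoly2) (b : bisection) (X w : R -> R -> R) :
  neg_cover [A; region_lo_poly; region_hi_poly] b = true ->
  (forall k V, in_region k V -> X k V * w k V = zpeval2 A (kscale k) (Vscale V)) ->
  (forall k V, in_region k V -> 0 < w k V) ->
  forall k V, in_region k V -> X k V < 0.
Proof.
  intros Hcov Hid Hw k V HkV.
  destruct (in_region_box k V HkV) as [Hk [HV [Hlo Hhi]]].
  pose proof (Hw k V HkV).
  assert (HA : zpeval2 A (kscale k) (Vscale V) < 0).
  { apply (neg_cover3_sound A region_lo_poly region_hi_poly b Hcov);
      [unfold kscale | unfold Vscale | rewrite region_lo_poly_eval | rewrite region_hi_poly_eval];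
      lra. }
  rewrite <- Hid in HA by exact HkV. nra.
Qed.

Definition Gline (mr k z V : R) : R := Gf mr (gamma_of k) z V (barrier_line k V).

(* Where [Gline < 0], [defect < 0] says that the field is steeper than the barrier. *)
Definition defect (mr k z V : R) : R :=
  Ff mr (gamma_of k) z V (barrier_line k V) - barrier_slope k * Gline mr k z V.

Ltac certificate_identity :=
  let k := fresh "k" in let V := fresh "V" in let H := fresh "H" in
  intros k V H; cbv beta;
  destruct (in_region_factors k V H) as (? & ? & ? & ? & ?);
  lazymatch goal with |- _ = zpeval2 ?P _ _ => unfold P end;
  unfold defect, Gline, Ff, Gf, lam, a1, a2, a3, barrier_line, barrier_slope, V1_of,
    V6_bound, gamma_of, zm_of, zM_bound, kscale, Vscale, zpeval2, zpeval;
  cbn [fold_right]; field; repeat split; lra.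

Ltac weight_pos :=
  let k := fresh "k" in let V := fresh "V" in let H := fresh "H" in
  intros k V H; cbv beta;
  destruct (in_region_factors k V H) as (? & ? & ? & ? & ?);
  repeat first [apply Rmult_lt_0_compat | apply pow_lt | apply IZR_lt; reflexivity | lra].

(* Each [_poly] is the named quantity times the stated positive weight, in the
   variables [(kscale k, Vscale V)] of the unit square; [_cut] is a bisection on
   whose boxes it or one of the two region polynomials is shown negative. *)
Definition defect_m1_zm_poly : zpoly2 := ([[(-48315451524313463166995192266667752592033);(-1337709285236762434984325393315838067308);(131431637680471682964782871818348548738674);(-102915792903618302018211856942198437817692);(18971883976522297514489032937323833568359)];
 [(-137654036623561013077876679242782074322378);(-150178029399962033420918270581358719896);(345773752360370640237348381548018881001556);(-269072666280262559904440703809978983320504);(52764685851943042441661462177609264080422)];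
 [(-123805816735335492538692166989684875967099);(42666600681758091642472882312377919668828);(314539948764267234227885432300214918157254);(-249053151257336749719444097326427241579124);(53049136300578187487609765976022325499549)];
 [(-978273353470175032646059616499171212268);(55031224941395042012363223098993725570512);(80953450697621805992186494863081808351800);(-76005241552530075498781718360282348199600);(18285953350525178090360522568599908231380)];
 [(55707031465984297356831967535563800456567);(-11369822325126465284137232738390219580108);(-48590870206316033556417049179753510172350);(22172662657344467632424262398909261191620);(-5674147052987669661141581729524176672705)];
 [(25178233678697871534660197779780497179226);(-41064054984934288288139363109908871539304);(-44071794389701095473012039960627646070452);(18561991294296600384434456740988418369336);(-6370005726440907244233909682464139478742)];
 [(3562647267652969274163955108475701740261);(-17316254789701686688896642820564172386980);(-19260470788841563199279337860884583044218);(196257396703070780975853577021682497932);(-1358518743142137336006474771040194185091)];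
 [(1800079744327438815898024794385432589424);(-2223575764699438884131746936632081878112);(-7598829620389607632722048742935353149632);(-3239149666949589864758230795968701677728);(356459176530792036359772494911261804368)];
 [(857150341850106952889262616456115133861);(106431522823088022460932216309675707676);(-2316486921573533563862011514816684667450);(-1337902699608397054762516356881580098100);(227729342746868636141347438864537143165)];
 [(242466251412312343380347131652458859466);(219684020861198152877050807888242715416);(-294744104157912223809361809037496850900);(-239020220062939284216915602808174173640);(32891752143641322648665335397074533210)];
 [(64194288494255437245247046206456520247);(133209467303023995559763815998766182132);(66592931284923182338378965635416094082);(-7861997293472032269980538721851673596);(-5439789860300292419277115747588505793)];
 [(15998589840452534856134925368878570212);(43877615180471251430415686610739418448);(36777969887623543160792133099356132568);(5819713250855470506665651354436276048);(-3079231307496612269943807963846208284)];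
 [(2954069518745661843606140951744378949);(8585922291506405483801217021368582940);(7706946909815018297992081840500477702);(1460446616467130557722728818037735628);(-614647520588104705740177747212938083)];
 [(364774726810044767261939106160423782);(1059101851659510222154142579440398312);(951648081759735899552637212918430900);(184767736198361108344141239596176200);(-72553220711909336316292500042280170)];
 [(29200459001901562049611254259055967);(83758741431520585156518696616036692);(74429713713720555113542850091539250);(14384869099721022996862851688738020);(-5486562184380509009772556045820505)];
 [(1457088861959740280858527574521560);(4136533000993529922855567767100480);(3639219747972096599723645767995696);(697195918113442968004295727197952);(-262579690824863989722309848218824)];
 [(41240884687497301948359638633280);(116451002170138214090397251996928);(101900347110036866010524916841344);(19411226459648297543296632225024);(-7279003167747656325190671252672)];
 [(506135310874460679545156030976);(1429087936586712506951028793344);(1250451944513373443582150194176);(238181322764452084491838132224);(-89317996036669531684439299584)]])%Z.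

Definition defect_m1_zm_cut : bisection := (CutK (CutT (CutK (CutT (Stop 0) (Stop 0)) (CutT (Stop 0) (Stop 0))) (CutK (CutT (CutK (Stop 0) (Stop 0)) (CutK (CutT (Stop 0) (Stop 2)) (CutT (Stop 0) (Stop 2)))) (CutT (CutK (Stop 0) (Stop 0)) (CutK (CutT (Stop 0) (Stop 2)) (CutT (Stop 0) (Stop 2)))))) (CutT (CutK (CutT (Stop 0) (Stop 0)) (CutT (Stop 0) (Stop 0))) (CutK (CutT (CutK (Stop 0) (Stop 0)) (Stop 2)) (CutT (CutK (Stop 0) (Stop 0)) (Stop 2))))).

Lemma defect_neg_m1_zm k V : in_region k V -> defect 1 k (zm_of k) V < 0.
Proof.
  revert k V.
  apply (neg_of_certificate defect_m1_zm_poly defect_m1_zm_cut (fun k V => defect 1 k (zm_of k) V)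
           (fun k V => (1 + V) * ((k^2-1)^3*(k^2-2)^2*((k^2+2)*(k^2-1))) * IZR 6400000000000000000000000000000000000000)).
  - vm_compute. reflexivity.
  - certificate_identity.
  - weight_pos.
Qed.

Definition defect_m1_zM_poly : zpoly2 := ([[(-225999465630677609875764947438035837324291);(-14972163954617880479526612952285148418186);(643326117516113059681843808377517468167548);(-502425557618597063558939080784457787857174);(92588412658578807091215346786607708192103)];
 [(-750875415796135115353708488867903921147006);(-43699026614534196602263075338971564225412);(2037086439234173986992578222879005707391992);(-1580842204240458434041545969969342092604348);(306785581449743833288428899579012749167174)];
 [(-799548877516976943545426285613716216351073);(87354472538231407231930733914171366554546);(2401165913821806478413903874108508092483188);(-1870162508330949416479254486373133395209618);(387640874506835252783860210023776824392333)];
 [(-56328967276095392021040172796953468087236);(196566927529628576244161107578652047414504);(1109505757674586626527654886689435012002800);(-908927048173476525357497916902788938839400);(205679505990490913842628000318691846533460)];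
 [(444895005226742462544678961046534699718309);(-49572432494203510446241022884418599970586);(-109862133024178255755934689600225201113700);(-509517355381663837302572597532476229510);(900996150448668602184986420263631514015)];
 [(280798225313013060555482714606036371672302);(-267777083030051852167509272325185947715868);(-348281668678080695820281452564860358339704);(163947671685158355851323412818803420851292);(-50252586289001190487839898720399150978614)];
 [(60009152862487648122085007619142908420447);(-174742789183255387518915698088595867469070);(-189605223137587504163935618065634551420876);(34572041672670966721948118443598310533934);(-20044357718240536572801880092843327746547)];
 [(12160961545593801183528656042778943197648);(-42436346662904942020149234234480788244864);(-77248609653035731332584633967063224793504);(-21995654292205036414393040282094575757696);(331844766004149935742311961888175874256)];
 [(6615534250234229014985437600327761431247);(-4020189571035210699976479381527674817358);(-26796568675132009449557493774010418328300);(-13973576442610341428374520769532622716050);(2257782765250654975012721373498483983805)];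
 [(2209685062751578009243115086042699203582);(727209227017060893588580984632421165572);(-5289613101077579292842091416670385159800);(-3236890458564484989794775066932004099780);(574086116299450885534182153032747664570)];
 [(596613497193336142567507964851850408469);(1001791674719681478121687091546589283494);(165668170329725502131022085026191575164);(-245906700037057530246512530409128309062);(-6566502467950032074428681596116258481)];
 [(167175396348562515892955757606379377324);(448586660952913526609787989675457467976);(364184629403874499936148722084003691376);(49860790148740463342964865396561649976);(-32923600498639874037669339805603740828)];
 [(35875310853582306917097098231237193423);(104664671052227845148100537276744677490);(93661373990279127891355949414610245844);(16608950179359195980343547009360764846);(-8263072410229760666439182726937297411)];
 [(4943307960140251620518733080541756114);(14355706254824201045548508801546264604);(12793214873255282295697127610262251000);(2286589932019861781384506076506433700);(-1094226648904588211496551106739162890)];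
 [(423127239130072889678211027079472109);(1208502554106053208382544596353529014);(1059151431382909119364458606148705500);(185301011214614268218219820788581290);(-88475105192524616901037719815748585)];
 [(21882165888285026065417436811776520);(61715189258646882542751682096612560);(53389863644407411830549808064092992);(9162822646265530947771865182256944);(-4394017627780024405443697597000008)];
 [(628310521466523043298088899751360);(1761307968773010896636796657392256);(1513941319294742505851085204235008);(257200818136544494984136035298688);(-123743053851710157528241411295424)];
 [(7711120324499136235423259530752);(21614955040874026667634310499328);(18578143175627262590363374313472);(3155902526628990119516855251968);(-1518405932623382038635468092928)]])%Z.

Definition defect_m1_zM_cut : bisection := (CutK (CutT (CutK (CutT (Stop 0) (Stop 0)) (CutT (Stop 0) (Stop 0))) (CutK (CutT (CutK (Stop 0) (Stop 0)) (CutK (CutT (Stop 0) (Stop 2)) (CutT (Stop 0) (Stop 2)))) (CutT (CutK (Stop 0) (Stop 0)) (CutK (CutT (Stop 0) (Stop 2)) (CutT (CutK (Stop 0) (Stop 2)) (Stop 2)))))) (CutT (CutK (CutT (Stop 0) (Stop 0)) (CutT (Stop 0) (Stop 0))) (CutK (CutT (CutK (CutT (Stop 0) (Stop 0)) (CutT (Stop 0) (Stop 0))) (Stop 2)) (CutT (CutK (CutT (Stop 0) (CutK (CutT (Stop 0) (CutK (Stop 0) (CutT (Stop 0) (Stop 2)))) (CutT (Stop 0) (CutK (CutT (Stop 0) (Stop 2)) (Stop 2))))) (CutT (Stop 0) (CutK (CutT (Stop 0) (Stop 2)) (CutT (CutK (Stop 0) (CutT (Stop 0) (CutK (CutT (Stop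 0) (Stop 2)) (CutT (Stop 0) (Stop 2))))) (Stop 2))))) (Stop 2))))).

Lemma defect_neg_m1_zM k V : in_region k V -> defect 1 k (zM_bound k) V < 0.
Proof.
  revert k V.
  apply (neg_of_certificate defect_m1_zM_poly defect_m1_zM_cut (fun k V => defect 1 k (zM_bound k) V)
           (fun k V => (1 + V) * ((k^2-1)^3*(k^2-2)^2*(17*k^4-40*k^2+16)) * IZR 6400000000000000000000000000000000000000)).
  - vm_compute. reflexivity.
  - certificate_identity.
  - weight_pos.
Qed.

Definition Gline_m1_zm_poly : zpoly2 := ([[(-472021600562619295431351772847);(687376203213727017028032405957);(-274261934238788782607095484073);(28528857232412954784645240963)];
 [(-539554853483052435117750716874);(1014716282475034139608626047406);(-441860782280292087269347917126);(45251145505453781061705640194)];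
 [(-136042650449459559403112072547);(458791028794923132021484175649);(-197456904508866207343486958421);(11119186634104912935032826183)];
 [(-28405076302747461143810202120);(97398017805068245175025743640);(2366870433957015458264512200);(-16325338454190994958059734360)];
 [(-15012205579635613179361162830);(17985919791099653678529642330);(23695174804202335426502711070);(-12517590248757700888595727690)];
 [(-5660233419382258311602052156);(2630540768855097527345850516);(6934860005258422600726920156);(-3177105912525691941914990196)];
 [(-1350651397913643558111556302);(-481316777334299368167296742);(906184361290298478342888222);(-46246116739700113498924938)];
 [(-334225744242491807699408856);(-452078934148686597074432568);(31282052774743706271610392);(155894111644521362786813304)];
 [(-74225401359564977991557955);(-123092270231880733855294815);(-8948026558507799123356725);(40380398007579653652892935)];
 [(-10499937252718118747615370);(-17292934134662055943974930);(-1620900632794615045659270);(5172342379034225579101890)];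
 [(-844459864086498667741647);(-1350055789293601161451323);(-126546293524313495461833);(379049664625370133391683)];
 [(-35457289302934293684624);(-55726068853441054984464);(-5069596401791442310896);(15199183148715318988944)];
 [(-605181569517500455872);(-950999609241786430656);(-86454509931071493696);(259363529793214481088)]])%Z.

Definition Gline_m1_zm_cut : bisection := (CutK (CutT (CutK (CutT (Stop 0) (Stop 0)) (CutT (Stop 0) (Stop 0))) (CutK (CutT (Stop 0) (CutK (Stop 0) (CutT (Stop 0) (Stop 2)))) (CutT (Stop 0) (CutK (CutT (Stop 0) (Stop 2)) (CutT (CutK (Stop 0) (Stop 2)) (Stop 2)))))) (CutT (CutK (CutT (Stop 0) (Stop 0)) (CutT (Stop 0) (Stop 0))) (CutK (CutT (CutK (Stop 0) (CutT (Stop 0) (Stop 0))) (Stop 2)) (CutT (CutK (CutT (Stop 0) (CutK (Stop 0) (CutT (Stop 0) (CutK (Stop 0) (Stop 2))))) (CutT (Stop 0) (CutK (CutT (Stop 0) (Stop 2)) (CutT (Stop 0) (Stop 2))))) (Stop 2))))).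

Lemma Gline_neg_m1_zm k V : in_region k V -> Gline 1 k (zm_of k) V < 0.
Proof.
  revert k V.
  apply (neg_of_certificate Gline_m1_zm_poly Gline_m1_zm_cut (fun k V => Gline 1 k (zm_of k) V)
           (fun k V => (k^2-1)^2*(k^2-2)*((k^2+2)*(k^2-1)) * IZR 8000000000000000000000000000)).
  - vm_compute. reflexivity.
  - certificate_identity.
  - weight_pos.
Qed.

Definition Gline_m1_zM_poly : zpoly2 := ([[(-2293284067522885995299884744769);(3349346460820607500148766873009);(-1338104484558421231655485729611);(139229272611044565482923306371)];
 [(-3820302045697839960605832817398);(6717375784752246810145928972502);(-2867310374251831710381098429202);(294940922244892359155068283298)];
 [(-1745108047749891921985986756669);(4516227226185647002905621786093);(-1987448093263608546815803671327);(159309440683356686184148245111)];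
 [(-173264273608670700395749221240);(1224373848953385632075557575480);(-330086518443511704219633676200);(-67971632120033142298848684120)];
 [(-75602729457926431750170067410);(203005440345548552426582604210);(171369640535526608890533271290);(-105006354944063876119286270730)];
 [(-44369165295172616012437097412);(49506311296561740771279769092);(78888625317474032477166220692);(-40843000837651044487738753332)];
 [(-10500658762702744584259141554);(3797436723935529364041322386);(11193807596303732501693090394);(-4456274142270503738837123946)];
 [(-2883611505948341647198278312);(-3572799129934697209242245976);(542139150399480568028149704);(1325849825583063488338626168)];
 [(-787536502047973763519178285);(-1272038783555798766975473955);(31664326603258816848155025);(522628374267269825991629895)];
 [(-124848541586120845531383990);(-192513925071432832363042410);(10975630508223881553851310);(78644459811924516383132130)];
 [(-10553646768957650905812369);(-15443668120354728203671551);(1351027956570133598745669);(6241049769163346788618611)];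
 [(-450814106851593162561648);(-643391527723054914769488);(65808692656698670604208);(258386113528160422812048)];
 [(-7694451383865362938944);(-10979722761246079699392);(1123908629103929418048);(4409180006484646178496)]])%Z.

Definition Gline_m1_zM_cut : bisection := (CutK (CutT (CutK (CutT (Stop 0) (Stop 0)) (CutT (Stop 0) (Stop 0))) (CutK (CutT (Stop 0) (CutK (CutT (Stop 0) (Stop 0)) (CutT (Stop 0) (Stop 2)))) (CutT (CutK (Stop 0) (Stop 0)) (CutK (CutT (Stop 0) (Stop 2)) (CutT (CutK (Stop 0) (Stop 2)) (Stop 2)))))) (CutT (CutK (CutT (Stop 0) (Stop 0)) (CutT (Stop 0) (Stop 0))) (CutK (CutT (CutK (CutT (Stop 0) (Stop 0)) (CutT (Stop 0) (Stop 0))) (Stop 2)) (CutT (CutK (CutT (Stop 0) (CutK (CutT (Stop 0) (CutK (Stop 0) (CutT (Stop 0) (Stop 2)))) (CutT (Stop 0) (CutK (CutT (Stop 0) (Stop 2)) (Stop 2))))) (CutT (Stop 0) (CutK (CutT (Stop 0) (Stop 2)) (CutT (CutK (Stop 0) (CutT (Stop 0) (CutK (CutT (Stop 0) (Stop 2)) (CutT (Stop 0) (Stop 2))))) (Stop 2))))) (Stop 2))))).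

Lemma Gline_neg_m1_zM k V : in_region k V -> Gline 1 k (zM_bound k) V < 0.
Proof.
  revert k V.
  apply (neg_of_certificate Gline_m1_zM_poly Gline_m1_zM_cut (fun k V => Gline 1 k (zM_bound k) V)
           (fun k V => (k^2-1)^2*(k^2-2)*(17*k^4-40*k^2+16) * IZR 8000000000000000000000000000)).
  - vm_compute. reflexivity.
  - certificate_identity.
  - weight_pos.
Qed.

Definition defect_m2_zm_poly : zpoly2 := ([[(-60690645547370728279226988076756078332002);(-1872271293282829001734227117807861336039);(142232930537170498154507758695117950836143);(-103955132061930685373968864151025338191461);(18971883976522297514489032937323833568359)];
 [(-136833915316162761950017077928337281994340);(5745073133742544512641761728897570411690);(350928877318275782566906012418292296666118);(-268992671178101672993086151624739704459490);(52764685851943042441661462177609264080422)];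
 [(-102953551397918212184518322996766616137510);(43675209321294855459256584263355957321267);(297324531589043440679714379272229142869189);(-246424911734680026730225008312472794690039);(53049136300578187487609765976022325499549)];
 [(-7114431943659323696648331432148834000104);(44728922376207412988711409435628792151676);(76671205344943195480037554072866060595140);(-76121342930210205651281117302782825325260);(18285953350525178090360522568599908231380)];
 [(33563121570032668004021785161886439054766);(-10359860796923243290946876217451188760479);(-28739074284899407053107330744166728643225);(18870587154606242789733441939879650499315);(-5674147052987669661141581729524176672705)];
 [(16486956630060095740532799549844115061732);(-30532454385959806013142062185243507489242);(-25958630023004956126206780227484234914454);(17452278013380481662115017319530083357778);(-6370005726440907244233909682464139478742)];
 [(2113199846976004950090050536610088860346);(-12262599812767159668578189326934292994509);(-11184031001451475700475658163899305638139);(1769594786481666935387175208511467631625);(-1358518743142137336006474771040194185091)];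
 [(1219362475577942053785836338088265295056);(-1415408380071078412811112459012970392960);(-4712495680848931467194496126813497155872);(-1741700380786770932663501113763124463488);(356459176530792036359772494911261804368)];
 [(621623482324771134549601166782924655658);(136651843530496919026352562262718781123);(-1508331251734649781675940907632616045355);(-795494210002257987481527545323745027655);(227729342746868636141347438864537143165)];
 [(176152302429010808952017975839924136868);(160312108341671331364564348123371479958);(-204810046741453830358017459594856810950);(-156028199110255603681413949413197620830);(32891752143641322648665335397074533210)];
 [(45523495432978227421273522196162368542);(90957774579723492421604568007858492401);(38570448885214199686876024907907981879);(-12303580031157721607297755468746247773);(-5439789860300292419277115747588505793)];
 [(11211184586111473143770863896734133528);(29796032715647382448656482549004107148);(22953409288973887325943685182125051124);(1289329862688621941212346026796069220);(-3079231307496612269943807963846208284)];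
 [(2070655554745376717121648300225828618);(5852195497189670819030307656012150019);(4886746123290634571920180836130078677);(490558660259196369937244527505219193);(-614647520588104705740177747212938083)];
 [(256412797391498771880618966585839196);(724707418970317548114827477045156826);(607864559839031221805676763224301590);(67016717548303109255175752722703790);(-72553220711909336316292500042280170)];
 [(20573258399064781746347043330636366);(57466170797505242739858491165956521);(47726131744014318311715440649266175);(5346657161193348308431436768125515);(-5486562184380509009772556045820505)];
 [(1027972309560569185690753064569728);(2842221819863749548311590829933880);(2337947037237768739561414722123432);(261117836109724387218267108540456);(-262579690824863989722309848218824)];
 [(29111326232926972887063192825216);(80060488987578735763880662735296);(65507996108628896541381075742272);(7279830186229477339372934579520);(-7279003167747656325190671252672)];
 [(357271984146678126737757198336);(982497956403364848528832295424);(803861964330025785159953696256);(89317996036669531684439299584);(-89317996036669531684439299584)]])%Z.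

Definition defect_m2_zm_cut : bisection := (CutK (CutT (CutK (CutT (Stop 0) (Stop 0)) (CutT (Stop 0) (Stop 0))) (CutK (CutT (Stop 0) (CutK (CutT (Stop 0) (Stop 0)) (CutT (Stop 0) (Stop 2)))) (CutT (Stop 0) (CutK (CutT (Stop 0) (Stop 2)) (CutT (Stop 0) (Stop 2)))))) (CutT (CutK (CutT (Stop 0) (Stop 0)) (CutT (Stop 0) (Stop 0))) (CutK (CutT (CutK (Stop 0) (Stop 0)) (Stop 2)) (CutT (CutK (Stop 0) (CutT (Stop 0) (Stop 0))) (Stop 2))))).

Lemma defect_neg_m2_zm k V : in_region k V -> defect 2 k (zm_of k) V < 0.
Proof.
  revert k V.
  apply (neg_of_certificate defect_m2_zm_poly defect_m2_zm_cut (fun k V => defect 2 k (zm_of k) V)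
           (fun k V => (1 + V) * ((k^2-1)^3*(k^2-2)^2*((k^2+2)*(k^2-1))) * IZR 3200000000000000000000000000000000000000)).
  - vm_compute. reflexivity.
  - certificate_identity.
  - weight_pos.
Qed.

Definition defect_m2_zM_poly : zpoly2 := ([[(-286394077591974169057084953580491121133764);(-17580984873711464290885833760295726756613);(696039625647397305683955778250833075054521);(-507497840529515792926787896245586886441247);(92588412658578807091215346786607708192103)];
 [(-779016776835998902176211012359349920570360);(-16316946487833626789291166968198377908450);(2090300661443663562728642417267012134689546);(-1583151423197533214940956207443554851047110);(306785581449743833288428899579012749167174)];
 [(-690234452770172033651114160435911843388060);(107823408869043544616461431991804802706009);(2325809911733476340667837508961725268806083);(-1856673022003286781715539424419745282075173);(387640874506835252783860210023776824392333)];
 [(-33614692609607909674244756341521880880448);(146277599051261158206205016002894108214292);(1042631226700548843717865266295479853379580);(-902797976002659407782536029265554571055620);(205679505990490913842628000318691846533460)];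
 [(312189385858941284034602894883344207557692);(-71284959972371198410053516457216443826893);(-16399242897414469378950045344258872108575);(-18039719118251368006581500931958795528695);(900996150448668602184986420263631514015)];
 [(185321429730312716117371463669185725434904);(-209327697942951432282142649127419907824814);(-208068024644448804562902083173494599247738);(150235135048989482785224908075552493814806);(-50252586289001190487839898720399150978614)];
 [(38947878795655342988273281886779517261892);(-124081800883008199638784784698624923357063);(-111722515704493925252455043125285033717533);(40732486738685052619486054261613492966715);(-20044357718240536572801880092843327746547)];
 [(7700824658143206678160439011555262473392);(-29600923054716574117100095008528087317280);(-48347852834691897235448989414004867539584);(-10390457969500164725674751986212600155616);(331844766004149935742311961888175874256)];
 [(4286616789967632334994805594593693051796);(-3148075308238825217529486397132747158759);(-17766267149251658126327132536881342182685);(-8144306639792972267581784522532542608485);(2257782765250654975012721373498483983805)];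
 [(1461788633371007916236697347673374479416);(375614936287287925429650456817340442786);(-3588974058416345837656455901155782200650);(-1932553554554048659456626761971645142010);(574086116299450885534182153032747664570)];
 [(401227650351630205998810725835665849484);(650736566436813486495556136072394938067);(59214742678649727916012108140875647713);(-196690866246971249404088790836434450071);(-6566502467950032074428681596116258481)];
 [(112873995172966067512856134676592153696);(294143435214814691044831569263948655876);(217863460822665749252032149068977506828);(3681446130034099843705089863257053900);(-32923600498639874037669339805603740828)];
 [(24181376432516600708204587306223447796);(68415344906174049773771068418591827833);(56193743614790328028296550482418132419);(3696711528858485282721106010307755451);(-8263072410229760666439182726937297411)];
 [(3326481033621470135975950034570218152);(9352403272154922760991651980511079342);(7635722130342912170866789451045492730);(515573245257988456568241692353322730);(-1094226648904588211496551106739162890)];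
 [(284457262927398815356874656619858892);(785507592442146426127297769627926107);(629170713989957598886880331511023225);(39645279282895455674552002416888705);(-88475105192524616901037719815748585)];
 [(14703579691236889813957886513795376);(40061084760653933274681923278380360);(31617413143137155306969729397864504);(1865890445940087440801995036279512);(-4394017627780024405443697597000008)];
 [(422108027738827449256049321014272);(1142669244669499765086014639944512);(895271352270807024875639905550784);(50967081488424551517433175325120);(-123743053851710157528241411295424)];
 [(5180443770126832837697479375872);(14022925377757116474456970034688);(10986113512510352397186033848832);(625225972256686721791075097088);(-1518405932623382038635468092928)]])%Z.

Definition defect_m2_zM_cut : bisection := (CutK (CutT (CutK (CutT (Stop 0) (Stop 0)) (CutT (Stop 0) (Stop 0))) (CutK (CutT (CutK (Stop 0) (Stop 0)) (CutK (CutT (Stop 0) (Stop 0)) (CutT (Stop 0) (Stop 2)))) (CutT (CutK (Stop 0) (Stop 0)) (CutK (CutT (Stop 0) (Stop 2)) (CutT (CutK (Stop 0) (Stop 2)) (Stop 2)))))) (CutT (CutK (CutT (Stop 0) (Stop 0)) (CutT (Stop 0) (Stop 0))) (CutK (CutT (CutK (Stop 0) (CutT (Stop 0) (Stop 0))) (Stop 2)) (CutT (CutK (CutT (Stop 0) (CutK (CutT (Stop 0) (CutK (Stop 0) (CutT (Stop 0) (Stop 2)))) (CutT (Stop 0) (CutK (CutT (Stop 0) (Stop 2)) (Stop 2))))) (CutT (Stop 0) (CutK (CutT (Stop 0) (Stop 2)) (CutT (CutK (Stop 0) (CutT (Stop 0) (CutK (CutT (Stop 0) (Stop 2)) (CutT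 (Stop 0) (Stop 2))))) (Stop 2))))) (Stop 2))))).

Lemma defect_neg_m2_zM k V : in_region k V -> defect 2 k (zM_bound k) V < 0.
Proof.
  revert k V.
  apply (neg_of_certificate defect_m2_zM_poly defect_m2_zM_cut (fun k V => defect 2 k (zM_bound k) V)
           (fun k V => (1 + V) * ((k^2-1)^3*(k^2-2)^2*(17*k^4-40*k^2+16)) * IZR 3200000000000000000000000000000000000000)).
  - vm_compute. reflexivity.
  - certificate_identity.
  - weight_pos.
Qed.

Definition Gline_m2_zm_poly : zpoly2 := ([[(-1330955564425914043729681378541);(1977669580411958847702937337871);(-821800347094408364944328832219);(94062136548056546933737562889)];
 [(-1491822708472939246862016950622);(2871846543577480605941677342218);(-1325652959622857313100134951378);(157232876408623577281658520582)];
 [(-374420848753272024163608217641);(1262109739962329861429759326947);(-601266812326159719750570475263);(55557632446689940724341278549)];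
 [(-94018868638653765314274606360);(261213582805488279829037230920);(-6318488271686586363960863400);(-36499185963169183039840003080)];
 [(-43866178804562800126843688490);(45489413999390741195720526990);(63988040975411428238418333210);(-33288413204933023112840783070)];
 [(-17521932115061165741157036468);(5113033878356316242497711548);(19516637837497473698870520468);(-8593805521215805416448650588)];
 [(-4151444076693163526759868906);(-1582472093684711565977090226);(2822100289284831474393864666);(-2447396918682152670374814)];
 [(-971399269815705824542226568);(-1271004594678068836284097704);(160904121746970299540431176);(480782683023650819979639912)];
 [(-215633653987604542134173865);(-353906811458717932434884445);(-17713316086104797187170175);(121944508014436425481478805)];
 [(-31023443733506212347646110);(-50897424610536268869524790);(-4329196796900190648177810);(15545522469784576158905670)];
 [(-2522557954356601251784941);(-4028079367229689539633969);(-367927792979396851265499);(1137593718721434842015049)];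
 [(-106371867908802881053872);(-167178206560323164953392);(-15208789205374326932688);(45597549446145956966832)];
 [(-1815544708552501367616);(-2852998827725359291968);(-259363529793214481088);(778090589379643443264)]])%Z.

Definition Gline_m2_zm_cut : bisection := (CutK (CutT (CutK (CutT (Stop 0) (Stop 0)) (CutT (Stop 0) (Stop 0))) (CutK (CutT (Stop 0) (CutK (Stop 0) (CutT (Stop 0) (Stop 2)))) (CutT (Stop 0) (CutK (CutT (Stop 0) (Stop 2)) (CutT (Stop 0) (Stop 2)))))) (CutT (CutK (CutT (Stop 0) (Stop 0)) (CutT (Stop 0) (Stop 0))) (CutK (CutT (CutK (Stop 0) (CutT (Stop 0) (Stop 0))) (Stop 2)) (CutT (CutK (CutT (Stop 0) (Stop 0)) (CutT (Stop 0) (CutK (CutT (Stop 0) (Stop 2)) (CutT (Stop 0) (Stop 2))))) (Stop 2))))).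

Lemma Gline_neg_m2_zm k V : in_region k V -> Gline 2 k (zm_of k) V < 0.
Proof.
  revert k V.
  apply (neg_of_certificate Gline_m2_zm_poly Gline_m2_zm_cut (fun k V => Gline 2 k (zm_of k) V)
           (fun k V => (k^2-1)^2*(k^2-2)*((k^2+2)*(k^2-1)) * IZR 16000000000000000000000000000)).
  - vm_compute. reflexivity.
  - certificate_identity.
  - weight_pos.
Qed.

Definition Gline_m2_zM_poly : zpoly2 := ([[(-6454172777527736714806273370677);(9630601316543107642658156440767);(-4009129156415238419600072239203);(459051084490950494658201199113)];
 [(-10581882234600337613966078122734);(19071706924886692945659767084106);(-8598236669585778804561669285666);(1011663546873386868044012049894)];
 [(-4665041484309580323536517673377);(12523006296386783086548645318339);(-6002565561020729490472885952151);(638351389196492228737972335333)];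
 [(-396842223732607533110075368920);(3231006085593207374779785380040);(-1075649241680052984729483172200);(-93983931637252134509579652360)];
 [(-201376889808427849264241761530);(513033872347028909139016477230);(444490932201573838778345936970);(-269781979969126632861770012190)];
 [(-116625461324135068504565742996);(132181972711780888234773457596);(209973398680416322832018680116);(-110819333232767738661978819996)];
 [(-27895829845147820252040869082);(9489915934860735791191534158);(29701198076686960115278421802);(-11428337503961801105062571838)];
 [(-7848506071054593005783082696);(-9649688937668661926186590248);(2117922035182221079127782152);(4182431153261534400142278504)];
 [(-2128149243681534584440357905);(-3321236701318758164215153965);(370105639872011877867694425);(1581193733415350967662489685)];
 [(-334456976285402694767114670);(-493435381642349902493875830);(77429795668907397882172830);(236417800091365839316596390)];
 [(-28147988777436121614921477);(-39191807993741222766253713);(7686889128794790455193837);(18730709629860555877135833)];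
 [(-1200482509256489657607984);(-1626222940383721724342064);(349417909457249201702064);(775158340584481268436144)];
 [(-20489718853663944005952);(-27751897687873949476416);(5965361185243933065024);(13227540019453938535488)]])%Z.

Definition Gline_m2_zM_cut : bisection := (CutK (CutT (CutK (CutT (Stop 0) (Stop 0)) (CutT (Stop 0) (Stop 0))) (CutK (CutT (Stop 0) (CutK (CutT (Stop 0) (Stop 0)) (CutT (Stop 0) (Stop 2)))) (CutT (CutK (Stop 0) (Stop 0)) (CutK (CutT (Stop 0) (Stop 2)) (CutT (CutK (Stop 0) (Stop 2)) (Stop 2)))))) (CutT (CutK (CutT (Stop 0) (Stop 0)) (CutT (Stop 0) (Stop 0))) (CutK (CutT (CutK (CutT (Stop 0) (Stop 0)) (CutT (Stop 0) (Stop 0))) (Stop 2)) (CutT (CutK (CutT (Stop 0) (CutK (CutT (Stop 0) (CutK (Stop 0) (CutT (Stop 0) (Stop 2)))) (CutT (Stop 0) (CutK (CutT (Stop 0) (Stop 2)) (Stop 2))))) (CutT (Stop 0) (CutK (CutT (Stop 0) (Stop 2)) (CutT (CutK (Stop 0) (CutT (Stop 0) (CutK (CutT (Stop 0) (Stop 2)) (CutT (Stop 0) (Stop 2))))) (Stop 2))))) (Stop 2))))).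

Lemma Gline_neg_m2_zM k V : in_region k V -> Gline 2 k (zM_bound k) V < 0.
Proof.
  revert k V.
  apply (neg_of_certificate Gline_m2_zM_poly Gline_m2_zM_cut (fun k V => Gline 2 k (zM_bound k) V)
           (fun k V => (k^2-1)^2*(k^2-2)*(17*k^4-40*k^2+16) * IZR 16000000000000000000000000000)).
  - vm_compute. reflexivity.
  - certificate_identity.
  - weight_pos.
Qed.

Definition margin_poly : zpoly2 := ([[(-46802786921942009)];
 [(-1392180211180386)];
 [(40970462005588905)];
 [(5384384605391580)];
 [(-4161066609877335)];
 [(-1128734930118546)];
 [(-99149038965369)];
 [(-2928898896840)]])%Z.

Lemma V6_bound_below_barrier k : k_range k -> 1 + V6_bound k < barrier_line k (V6_bound k).
Proof.
  intros Hk.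
  assert (Hcert : forall k V, in_region k V -> 1 + V6_bound k - barrier_line k (V6_bound k) < 0).
  { apply (neg_of_certificate margin_poly (Stop 0) (fun k _ => 1 + V6_bound k - barrier_line k (V6_bound k))
             (fun k _ => (k^2-1)*(17*k^4-40*k^2+16) * IZR 2000000000000000)).
    - vm_compute. reflexivity.
    - certificate_identity.
    - weight_pos. }
  assert (in_region k (V6_bound k)) by (split; [exact Hk | split; [apply V1_of_le_V6_bound, Hk | lra]]).
  specialize (Hcert k (V6_bound k) ltac:(assumption)). lra.
Qed.

Lemma Gline_affine mr k V z :
  Gline mr k z V = Gline mr k 0 V + z * (Gline mr k 1 V - Gline mr k 0 V).
Proof. unfold Gline, Gf, lam. ring. Qed.

Lemma defect_affine mr k V z : 1 + V <> 0 ->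
  defect mr k z V = defect mr k 0 V + z * (defect mr k 1 V - defect mr k 0 V).
Proof. intros HV. unfold defect, Gline, Ff, Gf, lam, a1, a2, a3. field. exact HV. Qed.

Lemma line_endpoint_signs mr k V : (mr = 1 \/ mr = 2) -> in_region k V ->
  defect mr k (zm_of k) V < 0 /\ defect mr k (zM_bound k) V < 0 /\
  Gline mr k (zm_of k) V < 0 /\ Gline mr k (zM_bound k) V < 0.
Proof.
  intros [-> | ->] H; repeat split.
  - exact (defect_neg_m1_zm k V H).
  - exact (defect_neg_m1_zM k V H).
  - exact (Gline_neg_m1_zm k V H).
  - exact (Gline_neg_m1_zM k V H).
  - exact (defect_neg_m2_zm k V H).
  - exact (defect_neg_m2_zM k V H).
  - exact (Gline_neg_m2_zm k V H).
  - exact (Gline_neg_m2_zM k V H).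
Qed.

Lemma barrier_slope_lt_field mr k z V : (mr = 1 \/ mr = 2) -> in_region k V ->
  zm_of k <= z <= zM_bound k ->
  barrier_slope k
  < Ff mr (gamma_of k) z V (barrier_line k V) / Gf mr (gamma_of k) z V (barrier_line k V).
Proof.
  intros Hmr HkV Hz.
  destruct (line_endpoint_signs mr k V Hmr HkV) as [D1 [D2 [G1 G2]]].
  destruct (in_region_factors k V HkV) as (_ & _ & _ & _ & HV).
  assert (HG : Gline mr k z V < 0)
    by exact (affine_neg_between (fun z => Gline mr k z V) _ _ z (Gline_affine mr k V) G1 G2 Hz).
  assert (HD : defect mr k z V < 0).
  { apply (affine_neg_between (fun z => defect mr k z V) (zm_of k) (zM_bound k));
      try assumption. intros z'. apply defect_affine. lra. }
  assert (Hinv : / Gline mr k z V < 0) by (apply Rinv_lt_0_compat, HG).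
  replace (Ff mr (gamma_of k) z V (barrier_line k V) / Gf mr (gamma_of k) z V (barrier_line k V))
    with (barrier_slope k + defect mr k z V * / Gline mr k z V)
    by (unfold defect, Gline in *; field; lra).
  nra.
Qed.

Lemma solution_below_barrier (mr k z : R) (C : R -> R) :
  (mr = 1 \/ mr = 2) -> k_range k -> zm_of k <= z <= zM_bound k ->
  sol_P6 mr (gamma_of k) z C -> C (V1_of k) <= k / (k^2 - 1) - 1/1000.
Proof.
  intros Hmr Hk Hz [_ [HC6 [[c [_ Hc]] [Hode [Hlim _]]]]].
  rewrite V1pt_gamma_of in Hode, Hlim by exact Hk.
  assert (HV16 : V1_of k <= V6pt (gamma_of k) z).
  { rewrite <- V1pt_gamma_of by exact Hk.
    apply V1pt_le_V6pt; [apply gamma_of_range, Hk | rewrite zm_gamma_of by exact Hk; lra]. }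
  assert (HV6 : V6pt (gamma_of k) z <= V6_bound k) by (apply V6pt_gamma_of_le; [exact Hk | lra]).
  unfold C6pt in HC6. set (V6 := V6pt (gamma_of k) z) in *.
  assert (Hstart : C V6 < barrier_line k V6).
  { pose proof (V6_bound_below_barrier k Hk).
    assert (barrier_slope k < 0) by (pose proof (k_range_bounds k Hk); unfold barrier_slope; lra).
    unfold barrier_line in *. nra. }
  destruct (Req_dec (V1_of k) V6) as [Heq | Hne].
  { assert (barrier_line k (V1_of k) = k / (k^2 - 1) - 1/1000) by (unfold barrier_line; ring).
    rewrite Heq in *. lra. }
  apply (right_limit_le_of_below_line C (V1_of k) V6 (k / (k^2 - 1) - 1/1000) (barrier_slope k));
    [lra | | exact Hlim].
  apply (below_line_of_crossing_slopes C
           (fun V => Ff mr (gamma_of k) z V (C V) / Gf mr (gamma_of k) z V (C V))); try lra.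
  - intros x Hx. apply Hode, Hx.
  - exists c. exact Hc.
  - intros x Hx Hon. change (C x = barrier_line k x) in Hon. rewrite Hon.
    apply barrier_slope_lt_field; [exact Hmr | | exact Hz]. split; [exact Hk | lra].
  - exact Hstart.
Qed.

Theorem mainTheorem11 :
  forall (m : nat) (gamma z : R),
    (m = 1%nat \/ m = 2%nat) ->
    2 <= gamma <= 3 ->
    zm gamma <= z < zM gamma ->
    forall C : R -> R,
      sol_P6 (INR m) gamma z C ->
      C (V1pt gamma) <> C1pt gamma.
Proof.
  intros m gamma z Hm Hg [Hzm HzM] C Hsol.
  destruct (gamma_param gamma Hg) as [k [Hk ->]].
  rewrite V1pt_gamma_of, C1pt_gamma_of by exact Hk.
  rewrite zm_gamma_of in Hzm by exact Hk.
  pose proof (zM_gamma_of_le k Hk).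
  assert (Hmr : INR m = 1 \/ INR m = 2) by (destruct Hm as [-> | ->]; [left | right]; reflexivity).
  pose proof (solution_below_barrier (INR m) k z C Hmr Hk ltac:(lra) Hsol).
  lra.
Qed.
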